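(* Let $\Omega\subset\mathbb{C}^n$ be a bounded connected domain and let $B(\Omega)$ be a Banach space of holomorphic functions on $\Omega$ containing all polynomials on $\Omega$, such that for every $z\in\Omega$ the evaluation functional $K_z(f)=f(z)$ is bounded on $B(\Omega)$, and such that the polynomials are dense in $B(\Omega)$. Let $\{z_k\}\subset\Omega$ and $\zeta\in\partial\Omega$ with $z_k\to\zeta$ and $\|K_{z_k}\|\to\infty$. Then $$k_{z_k}=\frac{K_{z_k}}{\|K_{z_k}\|}\to 0\quad\text{weak}^*\text{ in }(B(\Omega))^*\text{ as }k\to\infty.$$
   Context: A Banach space of holomorphic functions on $\Omega$ is a vector space of holomorphic functions on $\Omega$ (pointwise operations) with a complete norm. $\|K_z\|$ is the norm in the dual space $(B(\Omega))^*$. *)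

From HB Require Import structures.
From mathcomp Require Import all_boot all_order all_algebra.
From mathcomp Require Import complex.
From mathcomp Require Import all_classical all_reals all_analysis.
Import Order.TTheory GRing.Theory Num.Theory.
Import numFieldNormedType.Exports.

Set Implicit Arguments.
Unset Strict Implicit.
Unset Printing Implicit Defensive.

Local Open Scope ring_scope.
Local Open Scope classical_set_scope.

Definition Cx (R : realType) : numFieldType := R[i].

(* real-valued modulus of a complex number (|x| is real, stored in C) *)
Definition rnorm (R : realType) (x : Cx R) : R := complex.Re `|x|.

Definition vnorm (R : realType) (V : normedModType (Cx R)) (v : V) : R :=
  complex.Re `|v|.

Definition is_poly (R : realType) (n : nat) (p : 'rV[Cx R]_n -> Cx R) : Prop :=
  exists s : seq (Cx R * ('I_n -> nat)),
    forall z, p z = \sum_(m <- s) m.1 * \prod_(i < n) (z ord0 i) ^+ (m.2 i).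

(* [V] together with [ev] is a Banach space of holomorphic functions on Om: *)
(* each v : V is identified with the function ev v restricted to Om;        *)
(* and each ev v is holomorphic (C-Frechet differentiable) on Om.           *)
Definition hol_banach_space (R : realType) (n : nat)
    (Om : set 'rV[Cx R]_n) (V : completeNormedModType (Cx R))
    (ev : V -> 'rV[Cx R]_n -> Cx R) : Prop :=
  [/\ (forall (a : Cx R) (u v : V) z, Om z -> ev (a *: u + v) z = a * ev u z + ev v z),
      (forall u v : V, (forall z, Om z -> ev u z = ev v z) -> u = v) &
      (forall (v : V) z, Om z -> differentiable (ev v) z)].

Definition contains_polys (R : realType) (n : nat)
    (Om : set 'rV[Cx R]_n) (V : completeNormedModType (Cx R))
    (ev : V -> 'rV[Cx R]_n -> Cx R) : Prop :=
  forall p, is_poly p -> exists v : V, forall z, Om z -> ev v z = p z.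

Definition polys_dense (R : realType) (n : nat)
    (Om : set 'rV[Cx R]_n) (V : completeNormedModType (Cx R))
    (ev : V -> 'rV[Cx R]_n -> Cx R) : Prop :=
  closure [set v : V | exists p, is_poly p /\ forall z, Om z -> ev v z = p z]
  = setT.

Definition bounded_evals (R : realType) (n : nat)
    (Om : set 'rV[Cx R]_n) (V : completeNormedModType (Cx R))
    (ev : V -> 'rV[Cx R]_n -> Cx R) : Prop :=
  forall z, Om z -> exists M : R, forall v : V, rnorm (ev v z) <= M * vnorm v.

Definition Knorm (R : realType) (n : nat) (V : completeNormedModType (Cx R))
    (ev : V -> 'rV[Cx R]_n -> Cx R) (z : 'rV[Cx R]_n) : R :=
  sup [set rnorm (ev v z) | v in [set v : V | vnorm v <= 1]].

Definition kz (R : realType) (n : nat) (V : completeNormedModType (Cx R))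
    (ev : V -> 'rV[Cx R]_n -> Cx R) (z : 'rV[Cx R]_n) (v : V) : Cx R :=
  ev v z / ((Knorm ev z)%:C)%C.

Definition weak_star_cvg0 (R : realType) (V : completeNormedModType (Cx R))
    (phi : nat -> V -> Cx R) : Prop :=
  forall v : V, (fun k => phi k v) @ \oo --> (0 : Cx R).

From HB Require Import structures.
From mathcomp Require Import all_boot all_order all_algebra.
From mathcomp Require Import complex.
From mathcomp Require Import all_classical all_reals all_analysis.
Import Order.TTheory GRing.Theory Num.Theory.
Import numFieldNormedType.Exports.
Local Open Scope ring_scope.
Local Open Scope classical_set_scope.

(* Each k_z is a linear functional of norm at most 1, so it suffices to
   check weak-* convergence of k_{z_k} on the dense set of polynomials.  For
   a polynomial p the values p(z_k) stay bounded because (z_k) converges,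
   while ||K_{z_k}|| -> +oo, hence k_{z_k}(p) = p(z_k) / ||K_{z_k}|| -> 0.
   Neither holomorphy nor the geometry of Om and zeta plays a role. *)

Lemma dense_cvg0_contractions {K : numFieldType} {V : normedModType K}
    (phi : nat -> V -> K) (D : set V) :
  closure D = setT ->
  (forall k, {morph phi k : u v / u - v}) ->
  (forall k v, `|phi k v| <= `|v|) ->
  (forall w, D w -> phi ^~ w @ \oo --> 0) ->
  forall v, phi ^~ v @ \oo --> 0.
Proof.
move=> D_dense phiB phi_le phiD0 v; apply/cvgr0Pnorm_lt => e e_gt0.
have e2_gt0 : 0 < e / 2 by rewrite divr_gt0.
have : closure D v by rewrite D_dense.
move=> /(_ _ (nbhsx_ballx v _ e2_gt0)) [w [Dw]].
rewrite -ball_normE /ball_ => vw.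
apply: filterS ((cvgr0Pnorm_lt _).1 (phiD0 w Dw) _ e2_gt0) => k phikw.
have -> : phi k v = phi k (v - w) + phi k w by rewrite phiB subrK.
rewrite [e]splitr; apply: le_lt_trans (ler_normD _ _) _.
exact: ltrD (le_lt_trans (phi_le k _) vw) phikw.
Qed.

Lemma cvgn_normr_bounded {K : numFieldType} {V : normedModType K} {u : nat -> V} :
  cvgn u -> exists M : K, forall k, `|u k| <= M.
Proof.
by move=> /cvg_seq_bounded[M [_ uM]]; exists (M + 1) => k; apply: uM; rewrite ?ltrDl.
Qed.

Lemma bounded_cvg0M {K : numFieldType} (a c : nat -> K) (B : K) :
  (forall k, `|a k| <= B) -> c @ \oo --> 0 -> (fun k => a k * c k) @ \oo --> 0.
Proof.
move=> aB /cvgr0Pnorm_lt c0; apply/cvgr0Pnorm_lt => e e_gt0.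
have B1_gt0 : 0 < B + 1 by rewrite ltr_wpDl // (le_trans _ (aB 0)).
apply: filterS (c0 _ (divr_gt0 e_gt0 B1_gt0)) => k ck.
rewrite normrM; apply: le_lt_trans (ler_wpM2r (normr_ge0 _) (aB k)) _.
apply: (@le_lt_trans _ _ ((B + 1) * `|c k|)).
  by rewrite ler_wpM2r ?lerDl.
by rewrite mulrC -ltr_pdivlMr.
Qed.

Lemma normcR {R : rcfType} (r : R) : `|(r%:C)%C : R[i]| = (`|r|%:C)%C.
Proof. by rewrite normc_def /= expr0n addr0 sqrtr_sqr. Qed.

Lemma cvg0_realC {R : realType} {u : nat -> R} :
  u @ \oo --> 0 -> (fun k => (u k)%:C%C : Cx R) @ \oo --> 0.
Proof.
move=> /cvgr0Pnorm_lt u0; apply/cvgr0Pnorm_lt => e e_gt0.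
have e_real : e = ((complex.Re e)%:C)%C by rewrite RRe_real // gtr0_real.
move: e_gt0; rewrite e_real ltcR => e_gt0.
by apply: filterS (u0 _ e_gt0) => k; rewrite normcR ltcR.
Qed.

Lemma ler_norm_mx_entry {K : numDomainType} {m n : nat} (x : 'M[K]_(m, n)) i j :
  `|x i j| <= `|x|.
Proof.
change (`|x i j| <= mx_norm x); rewrite mx_normE -[leLHS]nngE num_le.
exact: (le_bigmax _ _ (i, j)).
Qed.

Lemma is_poly_bounded {R : realType} {n : nat} {p : 'rV[Cx R]_n -> Cx R} (M : Cx R) :
  is_poly p -> exists B, forall x, `|x| <= M -> `|p x| <= B.
Proof.
move=> [s ps]; exists (\sum_(m <- s) `|m.1| * \prod_(i < n) M ^+ m.2 i) => x xM.
rewrite ps; apply: le_trans (ler_norm_sum _ _ _) _.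
apply: ler_sum => m _; rewrite normrM ler_wpM2l // normr_prod.
apply: ler_prod => i _; rewrite normr_ge0 normrX /=.
have xiM := le_trans (ler_norm_mx_entry x ord0 i) xM.
by rewrite lerXn2r ?nnegrE ?(le_trans _ xiM).
Qed.

Section RealValuedNorms.
Context {R : realType}.

Lemma rnormE (x : Cx R) : `|x| = ((rnorm x)%:C)%C.
Proof. by rewrite /rnorm RRe_real // normr_real. Qed.

Lemma vnormE {V : normedModType (Cx R)} (v : V) : `|v| = ((vnorm v)%:C)%C.
Proof. by rewrite /vnorm RRe_real // ger0_real. Qed.

Lemma vnorm_ge0 {V : normedModType (Cx R)} (v : V) : 0 <= vnorm v.
Proof. by rewrite -(@ler0c R) -vnormE. Qed.

Lemma rnormM (x y : Cx R) : rnorm (x * y) = rnorm x * rnorm y.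
Proof. by apply: (@complexI R); rewrite rmorphM -!rnormE normrM. Qed.

Lemma rnormC (a : R) : 0 <= a -> rnorm ((a%:C)%C : Cx R) = a.
Proof. by move=> a0; apply: (@complexI R); rewrite -rnormE ger0_norm ?ler0c. Qed.

Lemma vnormZ {V : normedModType (Cx R)} (a : Cx R) (v : V) :
  vnorm (a *: v) = rnorm a * vnorm v.
Proof. by apply: (@complexI R); rewrite rmorphM /= -rnormE -!vnormE normrZ. Qed.

End RealValuedNorms.

Section EvaluationFunctionals.
Context {R : realType} {n : nat} {Om : set 'rV[Cx R]_n}.
Context {V : completeNormedModType (Cx R)} {ev : V -> 'rV[Cx R]_n -> Cx R}.
Hypothesis ev_linear : forall (a : Cx R) (u v : V) z,
  Om z -> ev (a *: u + v) z = a * ev u z + ev v z.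
Hypothesis evs_bounded : bounded_evals Om ev.
Context {z : 'rV[Cx R]_n}.
Hypothesis Om_z : Om z.

Lemma ev0 : ev 0 z = 0.
Proof. by have := @ev_linear (-1) 0 0 z Om_z; rewrite scaler0 addr0 mulN1r addNr. Qed.

Lemma evZ (a : Cx R) (v : V) : ev (a *: v) z = a * ev v z.
Proof. by rewrite -[a *: v]addr0 ev_linear // ev0 addr0. Qed.

Lemma evB : {morph ev^~ z : u v / u - v}.
Proof. by move=> u v; rewrite addrC -scaleN1r ev_linear // mulN1r addrC. Qed.

Let unit_evals := [set rnorm (ev v z) | v in [set v : V | vnorm v <= 1]].

Let unit_evals0 : unit_evals 0.
Proof. by exists 0; rewrite /= /vnorm ?normr0 ?ler01 // ev0 /rnorm normr0. Qed.

Let has_sup_unit_evals : has_sup unit_evals.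
Proof.
split; first by exists 0.
have [M evM] := evs_bounded z Om_z.
exists `|M| => _ [v /= v1 <-]; apply: le_trans (evM v) _.
apply: le_trans (ler_wpM2r (vnorm_ge0 v) (real_ler_norm (num_real M))) _.
exact: ler_piMr.
Qed.

Lemma Knorm_ge0 : 0 <= Knorm ev z.
Proof. exact: sup_upper_bound. Qed.

Lemma rnorm_ev_le_Knorm (v : V) : rnorm (ev v z) <= Knorm ev z * vnorm v.
Proof.
have [v0|v_neq0] := eqVneq v 0.
  by rewrite v0 ev0 /vnorm /rnorm !normr0 mulr0.
have v_gt0 : 0 < vnorm v.
  rewrite lt_def vnorm_ge0 andbT; apply: contraNneq v_neq0 => v0.
  by apply/eqP/normr0_eq0; rewrite vnormE v0.
pose c := (vnorm v)^-1.
have c_ge0 : 0 <= c by rewrite invr_ge0 vnorm_ge0.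
have : unit_evals (rnorm (ev ((c%:C)%C *: v) z)).
  by exists ((c%:C)%C *: v) => //=; rewrite vnormZ rnormC // mulVf ?gt_eqF.
move/(sup_upper_bound has_sup_unit_evals).
by rewrite evZ rnormM rnormC // mulrC -ler_pdivlMr ?invr_gt0 // invrK.
Qed.

Lemma norm_kz_le (v : V) : `|kz ev z v| <= `|v|.
Proof.
rewrite /kz; have [->|K_neq0] := eqVneq (Knorm ev z) 0.
  by rewrite rmorph0 invr0 mulr0 normr0 normr_ge0.
have K_gt0 : 0 < Knorm ev z by rewrite lt_def K_neq0 Knorm_ge0.
rewrite normrM normfV [`|(_%:C)%C|]ger0_norm ?ler0c ?(ltW K_gt0) //.
rewrite ler_pdivrMr ?ltcR //.
by rewrite rnormE vnormE -rmorphM lecR mulrC rnorm_ev_le_Knorm.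
Qed.

Lemma kzB : {morph kz ev z : u v / u - v}.
Proof. by move=> u v; rewrite /kz evB mulrBl. Qed.

End EvaluationFunctionals.

Lemma kz_cvg0_poly {R : realType} {n : nat} {Om : set 'rV[Cx R]_n}
    {V : completeNormedModType (Cx R)} (ev : V -> 'rV[Cx R]_n -> Cx R)
    (z : nat -> 'rV[Cx R]_n) (w : V) (p : 'rV[Cx R]_n -> Cx R) :
  (forall k, Om (z k)) -> (forall x, Om x -> ev w x = p x) -> is_poly p ->
  cvgn z -> (fun k => Knorm ev (z k)) @ \oo --> +oo ->
  (fun k => kz ev (z k) w) @ \oo --> 0.
Proof.
move=> Om_z wp p_poly z_cvg K_oo.
have [M zM] := cvgn_normr_bounded z_cvg.
have [B pB] := is_poly_bounded M p_poly.
have K_gt0 : \forall k \near \oo, 0 < Knorm ev (z k) by apply: (cvgryPgt _).1.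
have Kinv0 : (fun k => (Knorm ev (z k))^-1) @ \oo --> 0 by apply/gtr0_cvgV0.
have -> : (fun k => kz ev (z k) w) = (fun k => p (z k) * ((Knorm ev (z k))^-1)%:C%C).
  by apply: funext => k; rewrite /kz wp // fmorphV.
apply: bounded_cvg0M (fun k => pB _ (zM k)) _.
exact: cvg0_realC Kinv0.
Qed.

Theorem proposition2p8 (R : realType) (n : nat) (Om : set 'rV[Cx R]_n)
  (V : completeNormedModType (Cx R)) (ev : V -> 'rV[Cx R]_n -> Cx R)
  (z : nat -> 'rV[Cx R]_n) (zeta : 'rV[Cx R]_n) :
  open Om -> connected Om -> bounded_set Om ->
  hol_banach_space Om ev -> contains_polys Om ev -> bounded_evals Om ev ->
  polys_dense Om ev ->
  (forall k, Om (z k)) ->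
  closure Om zeta -> ~ Om zeta ->
  z @ \oo --> zeta ->
  (fun k => Knorm ev (z k)) @ \oo --> +oo ->
  weak_star_cvg0 (fun k => kz ev (z k)).
Proof.
move=> _ _ _ [ev_linear _ _] _ evs_bounded polys_dense Om_z _ _ z_cvg K_oo.
apply: (dense_cvg0_contractions _ _ polys_dense).
- move=> k; exact: (kzB ev_linear (Om_z k)).
- move=> k; exact: (norm_kz_le ev_linear evs_bounded (Om_z k)).
- by move=> w [p [p_poly wp]]; apply: kz_cvg0_poly Om_z wp p_poly (cvgP _ z_cvg) K_oo.
Qed.
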